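(* In $2\times2\times3$ Abalone, let $C0$ be the constellation with Black marbles on $c,g,j$ and Gray marbles on $a,d,h$, and let $C1$ be the constellation with Black marbles on $c,f,g$ and Gray marbles on $a,d,h$. If $C$ is any constellation obtained from $C0$ by a single legal Black move and $C$ is not isomorphic to $C1$, then Gray, moving next from $C$, can force a win.
   Context: The $2\times2\times3$ board has 10 hexagonal cells in three vertical columns of sizes 3, 4, 3. In axial coordinates (cells adjacent when differing by $\pm(0,1),\pm(1,0),\pm(1,-1)$) the cells are $a=(0,0)$, $b=(0,1)$, $c=(0,2)$ (left column, bottom to top), $d=(1,-1)$, $e=(1,0)$, $f=(1,1)$, $g=(1,2)$ (middle column, bottom to top), $h=(2,-1)$, $i=(2,0)$, $j=(2,1)$ (right column, bottom to top). Its maximal lines are $a$-$b$-$c$, $d$-$e$-$f$-$g$, $h$-$i$-$j$, $a$-$e$-$i$, $b$-$f$-$j$, $c$-$g$, $d$-$h$, $a$-$d$, $b$-$e$-$h$, $c$-$f$-$i$, $g$-$j$; adjacent cells are consecutive cells of these lines. A constellation assigns each cell black, gray or empty; each player has 3 marbles. Black (Left) and Gray (Right) alternate turns. On a turn a player moves 1, 2 or 3 of their own marbles occupying consecutive cells of a line, one step in one of the six lattice directions. Broadside move (direction not parallel to the group's line, or a single marble): each moved marble must land on an empty board cell. In-line move (direction parallel to the line, group of $k$ marbles): if the cell $X$ beyond the front marble is an empty board cell the group advances; if $X$ holds opponent marbles, forming $m$ consecutive opponent marbles in that direction, the push is legal only if $m<k$ and the cell after them is empty or off the board, and then all shift one step,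 an opponent marble leaving the board being removed; moves with $X$ off the board or holding an own marble are illegal, and one may never move one's own marble off the board. The game ends as soon as one marble is pushed off, the pusher winning; never-ending play is a draw. A player can force a win from a constellation with a given player to move if they have a strategy guaranteeing a push-off in finitely many moves against all opponent play. The symmetries of this board are the identity, the left-right reflection ($a\leftrightarrow h$, $b\leftrightarrow i$, $c\leftrightarrow j$, middle column fixed), the top-bottom reflection ($a\leftrightarrow c$, $d\leftrightarrow g$, $e\leftrightarrow f$, $h\leftrightarrow j$, $b,i$ fixed), and their composition; two constellations are isomorphic if a symmetry maps one onto the other. $C0$ is the official starting constellation of $2\times2\times3$ Abalone. *)

From Stdlib Require Import ZArith List Bool.
Import ListNotations.
Open Scope Z_scope.

(* The ten cells: a b c (left column), d e f g (middle), h i j (right). *)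
Inductive cell := ca | cb | cc | cd | ce | cf | cg | ch | ci | cj.

Definition all_cells : list cell := [ca; cb; cc; cd; ce; cf; cg; ch; ci; cj].

(* Axial coordinates. *)
Definition coord (x : cell) : Z * Z :=
  match x with
  | ca => (0, 0) | cb => (0, 1) | cc => (0, 2)
  | cd => (1, -1) | ce => (1, 0) | cf => (1, 1) | cg => (1, 2)
  | ch => (2, -1) | ci => (2, 0) | cj => (2, 1)
  end.

Definition cell_at (p : Z * Z) : option cell :=
  find (fun x => (fst (coord x) =? fst p) && (snd (coord x) =? snd p)) all_cells.

Inductive dir := dN | dS | dE | dW | dSE | dNW.

Definition vec (u : dir) : Z * Z :=
  match u with
  | dN => (0, 1) | dS => (0, -1) | dE => (1, 0) | dW => (-1, 0)
  | dSE => (1, -1) | dNW => (-1, 1)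
  end.

Definition neg (u : dir) : dir :=
  match u with
  | dN => dS | dS => dN | dE => dW | dW => dE | dSE => dNW | dNW => dSE
  end.

Definition go (x : cell) (u : dir) (n : nat) : option cell :=
  cell_at (fst (coord x) + Z.of_nat n * fst (vec u),
           snd (coord x) + Z.of_nat n * snd (vec u)).

Inductive content := Blk | Gry | Emp.
Inductive player := Black | Gray.

Definition own (p : player) : content := match p with Black => Blk | Gray => Gry end.
Definition other (p : player) : player := match p with Black => Gray | Gray => Black end.

Definition board := cell -> content.

(* Outcome of a move: the game continues with a new constellation,
   or an opponent marble has been pushed off the board (the mover wins). *)
Inductive outcome := Cont (B : board) | PushOff.

(* Broadside move (direction not parallel to the group's line, or a single
   marble): the group is go x u i for i < k, moved one step in direction d. *)
Definition broadside_move (p : player) (B : board) (x : cell) (u : dir) (k : nat)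
    (d : dir) (B' : board) : Prop :=
  let G := fun z => exists i, (i < k)%nat /\ go x u i = Some z in
  let T := fun z => exists y, G y /\ go y d 1 = Some z in
  (1 <= k <= 3)%nat /\
  (forall i, (i < k)%nat -> exists y, go x u i = Some y /\ B y = own p) /\
  (k = 1%nat \/ (d <> u /\ d <> neg u)) /\
  (forall y, G y -> exists t, go y d 1 = Some t /\ B t = Emp) /\
  (forall z, (T z -> B' z = own p) /\
             (~ T z -> G z -> B' z = Emp) /\
             (~ T z -> ~ G z -> B' z = B z)).

(* In-line move of a group of k >= 2 marbles with front marble y, moving in
   direction d; the group is go y (neg d) i for i < k. *)
Definition inline_group (p : player) (B : board) (y : cell) (d : dir) (k : nat) : Prop :=
  (2 <= k <= 3)%nat /\
  (forall i, (i < k)%nat -> exists z, go y (neg d) i = Some z /\ B z = own p).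

Definition inline_advance (p : player) (B : board) (y : cell) (d : dir) (k : nat)
    (B' : board) : Prop :=
  inline_group p B y d k /\
  exists X tl, go y d 1 = Some X /\ B X = Emp /\ go y (neg d) (k - 1) = Some tl /\
  (forall z, (z = X -> B' z = own p) /\
             (z = tl -> B' z = Emp) /\
             (z <> X -> z <> tl -> B' z = B z)).

Definition inline_push_stay (p : player) (B : board) (y : cell) (d : dir) (k : nat)
    (B' : board) : Prop :=
  inline_group p B y d k /\
  exists m X W tl, (1 <= m)%nat /\ (m < k)%nat /\
  (forall j, (1 <= j <= m)%nat -> exists z, go y d j = Some z /\ B z = own (other p)) /\
  go y d 1 = Some X /\ go y d (S m) = Some W /\ B W = Emp /\
  go y (neg d) (k - 1) = Some tl /\
  (forall z, (z = W -> B' z = own (other p)) /\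
             (z = X -> B' z = own p) /\
             (z = tl -> B' z = Emp) /\
             (z <> W -> z <> X -> z <> tl -> B' z = B z)).

Definition inline_push_off (p : player) (B : board) (y : cell) (d : dir) (k : nat) : Prop :=
  inline_group p B y d k /\
  exists m, (1 <= m)%nat /\ (m < k)%nat /\
  (forall j, (1 <= j <= m)%nat -> exists z, go y d j = Some z /\ B z = own (other p)) /\
  go y d (S m) = None.

Definition legal_move (p : player) (B : board) (o : outcome) : Prop :=
  match o with
  | Cont B' =>
      (exists x u k d, broadside_move p B x u k d B') \/
      (exists y d k, inline_advance p B y d k B') \/
      (exists y d k, inline_push_stay p B y d k B')
  | PushOff => exists y d k, inline_push_off p B y d k
  end.

Inductive forces_win (p : player) : board -> Prop :=
| fw_push B : legal_move p B PushOff -> forces_win p B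
| fw_move B B' : legal_move p B (Cont B') ->
    (forall o, legal_move (other p) B' o ->
       exists B'', o = Cont B'' /\ forces_win p B'') ->
    forces_win p B.

Definition sym_lr (x : cell) : cell :=
  match x with
  | ca => ch | ch => ca | cb => ci | ci => cb | cc => cj | cj => cc
  | cd => cd | ce => ce | cf => cf | cg => cg
  end.
Definition sym_tb (x : cell) : cell :=
  match x with
  | ca => cc | cc => ca | cd => cg | cg => cd | ce => cf | cf => ce
  | ch => cj | cj => ch | cb => cb | ci => ci
  end.
Definition symmetries : list (cell -> cell) :=
  [fun x => x; sym_lr; sym_tb; fun x => sym_lr (sym_tb x)].

Definition isomorphic (B1 B2 : board) : Prop :=
  exists s, In s symmetries /\ forall z, B2 z = B1 (s z).

Definition C0 : board := fun z =>
  match z with cc | cg | cj => Blk | ca | cd | ch => Gry | _ => Emp end.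
Definition C1 : board := fun z =>
  match z with cc | cf | cg => Blk | ca | cd | ch => Gry | _ => Emp end.

From Stdlib Require Import Arith List Bool Lia String Ascii FunctionalExtensionality.
Import ListNotations.
Local Open Scope nat_scope.

(* The theorem is a finite statement about a finite game, and it is proved by
   checking a certificate with a verified move generator. *)

Definition cell_eq_dec : forall x y : cell, {x = y} + {x <> y}.
Proof. decide equality. Defined.
Definition dir_eq_dec : forall u v : dir, {u = v} + {u <> v}.
Proof. decide equality. Defined.
Definition content_eq_dec : forall a b : content, {a = b} + {a <> b}.
Proof. decide equality. Defined.

Definition decb {P : Prop} (h : {P} + {~ P}) : bool := if h then true else false.

Lemma decb_spec (P : Prop) (h : {P} + {~ P}) : decb h = true <-> P.
Proof. unfold decb; destruct h; split; congruence || tauto. Qed.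

Lemma negb_decb_spec (P : Prop) (h : {P} + {~ P}) : negb (decb h) = true <-> ~ P.
Proof. unfold decb; destruct h; simpl; split; congruence || tauto. Qed.

Lemma all_cells_complete (x : cell) : In x all_cells.
Proof. destruct x; simpl; tauto. Qed.

Definition all_dirs : list dir := [dN; dS; dE; dW; dSE; dNW].

Lemma all_dirs_complete (u : dir) : In u all_dirs.
Proof. destruct u; simpl; tauto. Qed.

Lemma forallb_cells_spec (f : cell -> bool) :
  forallb f all_cells = true <-> forall z, f z = true.
Proof.
  rewrite forallb_forall; split; intros H z; auto using all_cells_complete.
Qed.

Lemma existsb_cells_spec (f : cell -> bool) :
  existsb f all_cells = true <-> exists z, f z = true.
Proof.
  rewrite existsb_exists; split; [intros [z [_ H]] | intros [z H]];
    eauto using all_cells_complete.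
Qed.

Definition lands (o : option cell) (z : cell) : bool :=
  match o with Some y => decb (cell_eq_dec y z) | None => false end.

Lemma lands_spec o z : lands o z = true <-> o = Some z.
Proof.
  destruct o as [y|]; simpl; [rewrite decb_spec|]; split; congruence.
Qed.

Definition holds (B : board) (o : option cell) (c : content) : bool :=
  match o with Some y => decb (content_eq_dec (B y) c) | None => false end.

Lemma holds_spec B o c : holds B o c = true <-> exists y, o = Some y /\ B y = c.
Proof.
  destruct o as [y|]; simpl.
  - rewrite decb_spec; split; [eauto | intros (y' & [= <-] & H); exact H].
  - split; [discriminate | intros (y & [=] & _)].
Qed.

Definition line_holds (B : board) (f : nat -> option cell) (c : content) (a n : nat) : bool :=
  forallb (fun i => holds B (f i) c) (seq a n).

Lemma line_holds_spec B f c a n :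
  line_holds B f c a n = true <->
  forall i, a <= i < a + n -> exists y, f i = Some y /\ B y = c.
Proof.
  unfold line_holds; rewrite forallb_forall.
  split; intros H i Hi; apply holds_spec, H, in_seq; exact Hi.
Qed.

Lemma line_holds_group_spec B f c k :
  line_holds B f c 0 k = true <-> forall i, i < k -> exists y, f i = Some y /\ B y = c.
Proof.
  rewrite line_holds_spec; split; intros H i Hi; apply H; lia.
Qed.

Definition in_line (x : cell) (u : dir) (k : nat) (z : cell) : bool :=
  existsb (fun i => lands (go x u i) z) (seq 0 k).

Lemma in_line_spec x u k z : in_line x u k z = true <-> exists i, i < k /\ go x u i = Some z.
Proof.
  unfold in_line; rewrite existsb_exists; split.
  - intros [i [Hi H]]; apply in_seq in Hi; apply lands_spec in H; exists i; split; [lia | exact H].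
  - intros [i [Hi H]]; exists i; split; [apply in_seq; lia | apply lands_spec; exact H].
Qed.

Definition target (x : cell) (u : dir) (k : nat) (d : dir) (z : cell) : bool :=
  existsb (fun y => in_line x u k y && lands (go y d 1) z) all_cells.

Lemma target_spec x u k d z : target x u k d z = true <->
  exists y, (exists i, i < k /\ go x u i = Some y) /\ go y d 1 = Some z.
Proof.
  unfold target; rewrite existsb_cells_spec.
  setoid_rewrite andb_true_iff; setoid_rewrite in_line_spec; setoid_rewrite lands_spec.
  reflexivity.
Qed.

Definition broadside_ok (p : player) (B : board) (x : cell) (u : dir) (k : nat) (d : dir) : bool :=
  (1 <=? k) && (k <=? 3) && line_holds B (go x u) (own p) 0 k &&
  ((k =? 1) || negb (decb (dir_eq_dec d u)) && negb (decb (dir_eq_dec d (neg u)))) &&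
  forallb (fun y => implb (in_line x u k y) (holds B (go y d 1) Emp)) all_cells.

Definition broadside (p : player) (B : board) (x : cell) (u : dir) (k : nat) (d : dir) : option board :=
  if broadside_ok p B x u k d then
    Some (fun z => if target x u k d z then own p else if in_line x u k z then Emp else B z)
  else None.

Lemma broadside_ok_spec p B x u k d : broadside_ok p B x u k d = true <->
  (1 <= k <= 3) /\ (forall i, i < k -> exists y, go x u i = Some y /\ B y = own p) /\
  (k = 1 \/ (d <> u /\ d <> neg u)) /\
  (forall y, (exists i, i < k /\ go x u i = Some y) -> exists t, go y d 1 = Some t /\ B t = Emp).
Proof.
  unfold broadside_ok.
  rewrite !andb_true_iff, orb_true_iff, andb_true_iff, !Nat.leb_le, Nat.eqb_eq,
    line_holds_group_spec, !negb_decb_spec, forallb_cells_spec.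
  setoid_rewrite implb_true_iff; setoid_rewrite holds_spec; setoid_rewrite in_line_spec.
  tauto.
Qed.

Lemma broadside_iff p B x u k d B' :
  broadside_move p B x u k d B' <->
  exists B0, broadside p B x u k d = Some B0 /\ forall z, B' z = B0 z.
Proof.
  unfold broadside_move, broadside; cbv beta zeta.
  destruct (broadside_ok p B x u k d) eqn:Hok.
  - apply broadside_ok_spec in Hok as (Hk & Hg & Hd & Ht).
    split.
    + intros (_ & _ & _ & _ & Hz); eexists; split; [reflexivity|]; intro z.
      destruct (Hz z) as (H1 & H2 & H3).
      destruct (target x u k d z) eqn:ET; [apply H1, target_spec, ET|].
      rewrite <- not_true_iff_false, target_spec in ET.
      destruct (in_line x u k z) eqn:EG; [apply H2, in_line_spec, EG; exact ET|].
      rewrite <- not_true_iff_false, in_line_spec in EG; auto.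
    + intros [B0 [[= <-] Hz]].
      split; [exact Hk|]; split; [exact Hg|]; split; [exact Hd|]; split; [exact Ht|].
      intro z; rewrite Hz; split; [|split]; intro HT.
      * apply target_spec in HT; rewrite HT; reflexivity.
      * rewrite <- target_spec, not_true_iff_false in HT; rewrite HT.
        intro HG; apply in_line_spec in HG; rewrite HG; reflexivity.
      * rewrite <- target_spec, not_true_iff_false in HT; rewrite HT.
        intro HG; rewrite <- in_line_spec, not_true_iff_false in HG; rewrite HG; reflexivity.
  - split; [|intros [? [[=] _]]].
    intros (Hk & Hg & Hd & Ht & _).
    rewrite <- not_true_iff_false, broadside_ok_spec in Hok; tauto.
Qed.

Definition inline_group_ok (p : player) (B : board) (y : cell) (d : dir) (k : nat) : bool :=
  (2 <=? k) && (k <=? 3) && line_holds B (go y (neg d)) (own p) 0 k.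

Lemma inline_group_ok_spec p B y d k :
  inline_group_ok p B y d k = true <-> inline_group p B y d k.
Proof.
  unfold inline_group_ok, inline_group.
  rewrite !andb_true_iff, !Nat.leb_le, line_holds_group_spec; tauto.
Qed.

Lemma own_not_empty p : own p <> Emp.
Proof. destruct p; discriminate. Qed.
Lemma other_not_empty p : own (other p) <> Emp.
Proof. destruct p; discriminate. Qed.
Lemma own_not_other p : own p <> own (other p).
Proof. destruct p; discriminate. Qed.

Lemma group_tail p B y d k tl :
  inline_group p B y d k -> go y (neg d) (k - 1) = Some tl -> B tl = own p.
Proof.
  intros [Hk Hg] Etl; destruct (Hg (k - 1)) as [w [Ew Bw]]; [lia|congruence].
Qed.

Definition advance (p : player) (B : board) (y : cell) (d : dir) (k : nat) : option board :=
  if inline_group_ok p B y d k then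
    match go y d 1, go y (neg d) (k - 1) with
    | Some X, Some tl =>
        if content_eq_dec (B X) Emp then
          Some (fun z => if cell_eq_dec z X then own p
                         else if cell_eq_dec z tl then Emp else B z)
        else None
    | _, _ => None
    end
  else None.

Lemma advance_iff p B y d k B' :
  inline_advance p B y d k B' <->
  exists B0, advance p B y d k = Some B0 /\ forall z, B' z = B0 z.
Proof.
  unfold inline_advance, advance; split.
  - intros [Hgrp (X & tl & EX & BX & Etl & Hz)].
    apply inline_group_ok_spec in Hgrp as Hok; rewrite Hok, EX, Etl.
    destruct (content_eq_dec (B X) Emp) as [_|]; [|contradiction].
    eexists; split; [reflexivity|]; intro z; destruct (Hz z) as (H1 & H2 & H3).
    destruct (cell_eq_dec z X); [auto|]; destruct (cell_eq_dec z tl); auto.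
  - destruct (inline_group_ok p B y d k) eqn:Hok; [|intros [? [[=] _]]].
    apply inline_group_ok_spec in Hok.
    destruct (go y d 1) as [X|] eqn:EX; [|intros [? [[=] _]]].
    destruct (go y (neg d) (k - 1)) as [tl|] eqn:Etl; [|intros [? [[=] _]]].
    destruct (content_eq_dec (B X) Emp) as [BX|]; [|intros [? [[=] _]]].
    intros [B0 [[= <-] Hz]].
    assert (tl <> X) by (intros ->; apply (own_not_empty p);
                         rewrite <- BX; symmetry; exact (group_tail _ _ _ _ _ _ Hok Etl)).
    split; [exact Hok|]; exists X, tl; repeat split; auto; intros; subst; rewrite Hz.
    + destruct (cell_eq_dec X X); congruence.
    + destruct (cell_eq_dec tl X), (cell_eq_dec tl tl); congruence.
    + destruct (cell_eq_dec z X), (cell_eq_dec z tl); congruence.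
Qed.

Definition push_ok (p : player) (B : board) (y : cell) (d : dir) (k m : nat) : bool :=
  inline_group_ok p B y d k && (1 <=? m) && (m <? k) &&
  line_holds B (go y d) (own (other p)) 1 m.

Lemma push_ok_spec p B y d k m : push_ok p B y d k m = true <->
  inline_group p B y d k /\ 1 <= m /\ m < k /\
  (forall j, 1 <= j <= m -> exists z, go y d j = Some z /\ B z = own (other p)).
Proof.
  unfold push_ok.
  rewrite !andb_true_iff, inline_group_ok_spec, Nat.leb_le, Nat.ltb_lt, line_holds_spec.
  split.
  - intros [[[Hg Hm] Hk] H]; split; [|split; [|split]]; auto; intros j Hj; apply H; lia.
  - intros (Hg & Hm & Hk & H); split; [split; [split|]|]; auto; intros j Hj; apply H; lia.
Qed.

Lemma push_ok_bound p B y d k m : push_ok p B y d k m = true -> 1 <= m <= 2.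
Proof. intros ([[_ Hk] _] & Hm & Hmk & _)%push_ok_spec; lia. Qed.

(* A push staying on the board: the opponent run shifts one step, so only the
   cell [W] after it, the first opponent cell [X] and the tail [tl] change. *)
Definition push_stay (p : player) (B : board) (y : cell) (d : dir) (k m : nat) : option board :=
  if push_ok p B y d k m then
    match go y d 1, go y d (S m), go y (neg d) (k - 1) with
    | Some X, Some W, Some tl =>
        if content_eq_dec (B W) Emp then
          Some (fun z => if cell_eq_dec z W then own (other p)
                         else if cell_eq_dec z X then own p
                         else if cell_eq_dec z tl then Emp else B z)
        else None
    | _, _, _ => None
    end
  else None.

Lemma push_stay_iff p B y d k B' :
  inline_push_stay p B y d k B' <->
  exists m B0, 1 <= m <= 2 /\ push_stay p B y d k m = Some B0 /\ forall z, B' z = B0 z.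
Proof.
  unfold inline_push_stay, push_stay; split.
  - intros [Hgrp (m & X & W & tl & Hm & Hmk & Hopp & EX & EW & BW & Etl & Hz)].
    assert (Hok : push_ok p B y d k m = true) by (apply push_ok_spec; auto).
    exists m; rewrite Hok, EX, EW, Etl.
    destruct (content_eq_dec (B W) Emp) as [_|]; [|contradiction].
    eexists; split; [eapply push_ok_bound; eauto|]; split; [reflexivity|].
    intro z; destruct (Hz z) as (H1 & H2 & H3 & H4).
    destruct (cell_eq_dec z W); [auto|]; destruct (cell_eq_dec z X); [auto|].
    destruct (cell_eq_dec z tl); auto.
  - intros (m & B0 & _ & Hpush & Hz); revert Hpush.
    destruct (push_ok p B y d k m) eqn:Hok; [|discriminate].
    apply push_ok_spec in Hok as (Hgrp & Hm & Hmk & Hopp).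
    destruct (go y d 1) as [X|] eqn:EX; [|discriminate].
    destruct (go y d (S m)) as [W|] eqn:EW; [|discriminate].
    destruct (go y (neg d) (k - 1)) as [tl|] eqn:Etl; [|discriminate].
    destruct (content_eq_dec (B W) Emp) as [BW|]; [|discriminate].
    intros [= <-].
    assert (Btl := group_tail _ _ _ _ _ _ Hgrp Etl).
    assert (BX : B X = own (other p))
      by (destruct (Hopp 1) as [z [Ez Bz]]; [lia | congruence]).
    pose proof (own_not_empty p); pose proof (other_not_empty p); pose proof (own_not_other p).
    assert (X <> W) by congruence; assert (tl <> W) by congruence; assert (tl <> X) by congruence.
    split; [exact Hgrp|]; exists m, X, W, tl; repeat split; auto; intros; subst; rewrite Hz.
    + destruct (cell_eq_dec W W); congruence.
    + destruct (cell_eq_dec X W), (cell_eq_dec X X); congruence.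
    + destruct (cell_eq_dec tl W), (cell_eq_dec tl X), (cell_eq_dec tl tl); congruence.
    + destruct (cell_eq_dec z W), (cell_eq_dec z X), (cell_eq_dec z tl); congruence.
Qed.

Definition push_off_ok (p : player) (B : board) (y : cell) (d : dir) (k m : nat) : bool :=
  push_ok p B y d k m && match go y d (S m) with None => true | Some _ => false end.

Lemma push_off_iff p B y d k :
  inline_push_off p B y d k <-> exists m, 1 <= m <= 2 /\ push_off_ok p B y d k m = true.
Proof.
  unfold inline_push_off, push_off_ok; split.
  - intros [Hgrp (m & Hm & Hmk & Hopp & Eoff)].
    assert (Hok : push_ok p B y d k m = true) by (apply push_ok_spec; auto).
    exists m; rewrite Hok, Eoff; split; [eapply push_ok_bound; eauto | reflexivity].
  - intros (m & _ & Hoff); apply andb_true_iff in Hoff as [Hok Eoff].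
    apply push_ok_spec in Hok as (Hgrp & Hm & Hmk & Hopp).
    split; [exact Hgrp|]; exists m; repeat split; auto.
    destruct (go y d (S m)); [discriminate | reflexivity].
Qed.

Definition option_list {A : Type} (o : option A) : list A :=
  match o with Some a => [a] | None => [] end.

Lemma in_option_list {A : Type} (o : option A) (a : A) : In a (option_list o) <-> o = Some a.
Proof. destruct o; simpl; split; intuition congruence. Qed.

Definition moves (p : player) (B : board) : list board :=
  flat_map (fun x => flat_map (fun u => flat_map (fun k => flat_map (fun d =>
    option_list (broadside p B x u k d)) all_dirs) (seq 1 3)) all_dirs) all_cells
  ++ flat_map (fun y => flat_map (fun d => flat_map (fun k =>
    option_list (advance p B y d k)) (seq 2 2)) all_dirs) all_cells
  ++ flat_map (fun y => flat_map (fun d => flat_map (fun k => flat_map (fun m =>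
    option_list (push_stay p B y d k m)) (seq 1 2)) (seq 2 2)) all_dirs) all_cells.

Definition can_push_off (p : player) (B : board) : bool :=
  existsb (fun y => existsb (fun d => existsb (fun k => existsb (fun m =>
    push_off_ok p B y d k m) (seq 1 2)) (seq 2 2)) all_dirs) all_cells.

(* The members of [moves p B]; the group sizes are in range because the side
   conditions of each move bound them. *)
Lemma in_moves p B B0 : In B0 (moves p B) <->
  (exists x u k d, broadside p B x u k d = Some B0) \/
  (exists y d k, 2 <= k <= 3 /\ advance p B y d k = Some B0) \/
  (exists y d k m, 2 <= k <= 3 /\ 1 <= m <= 2 /\ push_stay p B y d k m = Some B0).
Proof.
  unfold moves; rewrite !in_app_iff.
  repeat setoid_rewrite in_flat_map; repeat setoid_rewrite in_option_list;
  repeat setoid_rewrite in_seq.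
  assert (Hbroad : forall x u k d, broadside p B x u k d = Some B0 -> 1 <= k < 1 + 3).
  { unfold broadside; intros x u k d.
    destruct (broadside_ok p B x u k d) eqn:Hok; [|discriminate].
    apply broadside_ok_spec in Hok; lia. }
  split; intros [H | [H | H]].
  - left; destruct H as (x & _ & u & _ & k & _ & d & _ & H); exists x, u, k, d; exact H.
  - right; left; destruct H as (y & _ & d & _ & k & Hk & H); exists y, d, k; split; [lia | exact H].
  - right; right; destruct H as (y & _ & d & _ & k & Hk & m & Hm & H);
      exists y, d, k, m; split; [lia | split; [lia | exact H]].
  - left; destruct H as (x & u & k & d & H).
    exists x; split; [apply all_cells_complete|]; exists u; split; [apply all_dirs_complete|].
    exists k; split; [eapply Hbroad; eauto|]; exists d; split; [apply all_dirs_complete | exact H].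
  - right; left; destruct H as (y & d & k & Hk & H).
    exists y; split; [apply all_cells_complete|]; exists d; split; [apply all_dirs_complete|].
    exists k; split; [lia | exact H].
  - right; right; destruct H as (y & d & k & m & Hk & Hm & H).
    exists y; split; [apply all_cells_complete|]; exists d; split; [apply all_dirs_complete|].
    exists k; split; [lia|]; exists m; split; [lia | exact H].
Qed.

Theorem legal_cont_iff p B B' : legal_move p B (Cont B') <-> In B' (moves p B).
Proof.
  rewrite in_moves; cbn [legal_move]; split.
  - intros [(x & u & k & d & Hmove) | [(y & d & k & Hmove) | (y & d & k & Hmove)]].
    + apply broadside_iff in Hmove as (B0 & H & Hz); apply functional_extensionality in Hz.
      subst; left; eauto.
    + pose proof (proj1 (proj1 Hmove)) as Hk.
      apply advance_iff in Hmove as (B0 & H & Hz); apply functional_extensionality in Hz.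
      subst; right; left; eauto.
    + pose proof (proj1 (proj1 Hmove)) as Hk.
      apply push_stay_iff in Hmove as (m & B0 & Hm & H & Hz); apply functional_extensionality in Hz.
      subst; right; right; exists y, d, k, m; auto.
  - intros [(x & u & k & d & H) | [(y & d & k & _ & H) | (y & d & k & m & _ & Hm & H)]].
    + left; exists x, u, k, d; apply broadside_iff; eauto.
    + right; left; exists y, d, k; apply advance_iff; eauto.
    + right; right; exists y, d, k; apply push_stay_iff; exists m; eauto.
Qed.

Theorem can_push_off_iff p B : can_push_off p B = true <-> legal_move p B PushOff.
Proof.
  unfold can_push_off; cbn [legal_move].
  repeat setoid_rewrite existsb_exists; repeat setoid_rewrite in_seq.
  setoid_rewrite push_off_iff.
  split.
  - intros (y & _ & d & _ & k & _ & m & Hm & H); exists y, d, k, m; split; [lia | exact H].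
  - intros (y & d & k & m & Hm & H).
    assert (Hk : 2 <= k <= 3)
      by (apply andb_true_iff in H as [H _]; apply push_ok_spec in H as [[Hk _] _]; exact Hk).
    exists y; split; [apply all_cells_complete|]; exists d; split; [apply all_dirs_complete|].
    exists k; split; [lia|]; exists m; split; [lia | exact H].
Qed.

Definition code : Type := list content.

Definition cell_index (z : cell) : nat :=
  match z with
  | ca => 0 | cb => 1 | cc => 2 | cd => 3 | ce => 4
  | cf => 5 | cg => 6 | ch => 7 | ci => 8 | cj => 9
  end.

Definition decode (s : code) : board := fun z => nth (cell_index z) s Emp.
Definition encode (B : board) : code := map B all_cells.

Lemma decode_encode B : decode (encode B) = B.
Proof. apply functional_extensionality; intros []; reflexivity. Qed.

Definition mem (s : code) (L : list code) : bool :=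
  existsb (fun t => decb (list_eq_dec content_eq_dec s t)) L.

Lemma mem_spec s L : mem s L = true <-> In s L.
Proof.
  unfold mem; rewrite existsb_exists; setoid_rewrite decb_spec.
  split; [intros [t [Ht ->]]; exact Ht | eauto].
Qed.

(* An entry [(s, None)] asserts that the player can
   push off at once from [decode s]; an entry [(s, Some t)] asserts that the
   player can move from [decode s] to [decode t], where the opponent cannot
   push off and every opponent move leads to a constellation listed in
   [solved], the entries checked before. *)

Definition entry_ok (p : player) (solved : list code) (s : code) (reply : option code) : bool :=
  match reply with
  | None => can_push_off p (decode s)
  | Some t =>
      mem t (map encode (moves p (decode s))) &&
      negb (can_push_off (other p) (decode t)) &&
      forallb (fun q => mem q solved) (map encode (moves (other p) (decode t)))
  end.

Fixpoint certificate_ok (p : player) (solved : list code) (tbl : list (code * option code)) : bool :=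
  match tbl with
  | [] => true
  | (s, reply) :: rest => entry_ok p solved s reply && certificate_ok p (s :: solved) rest
  end.

Lemma entry_ok_sound p solved s reply :
  (forall q, In q solved -> forces_win p (decode q)) ->
  entry_ok p solved s reply = true -> forces_win p (decode s).
Proof.
  intros Hsolved; destruct reply as [t|]; cbn [entry_ok].
  - rewrite !andb_true_iff, mem_spec, negb_true_iff, forallb_forall.
    intros [[Hreply Hno_push] Hanswers].
    apply in_map_iff in Hreply as [B' [<- Hin]].
    rewrite decode_encode in Hno_push, Hanswers.
    apply (fw_move p (decode s) B'); [apply legal_cont_iff; exact Hin|].
    intros [B'' |] Hmove.
    + exists B''; split; [reflexivity|].
      apply legal_cont_iff in Hmove.
      rewrite <- (decode_encode B''); apply Hsolved, mem_spec, Hanswers, in_map, Hmove.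
    + apply can_push_off_iff in Hmove; congruence.
  - intro H; apply fw_push, can_push_off_iff, H.
Qed.

Lemma certificate_ok_sound p tbl : forall solved,
  (forall q, In q solved -> forces_win p (decode q)) ->
  certificate_ok p solved tbl = true ->
  forall s, In s (map fst tbl) -> forces_win p (decode s).
Proof.
  induction tbl as [|[s reply] rest IH]; intros solved Hsolved Hok q Hq; [contradiction|].
  cbn [certificate_ok] in Hok; apply andb_true_iff in Hok as [Hentry Hrest].
  assert (Hs : forces_win p (decode s)) by (eapply entry_ok_sound; eauto).
  destruct Hq as [<- | Hq]; [exact Hs|].
  apply (IH (s :: solved)); auto.
  intros q' [<- | Hq']; auto.
Qed.

Corollary certificate_sound p tbl :
  certificate_ok p [] tbl = true -> forall s, In s (map fst tbl) -> forces_win p (decode s).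
Proof. intros Hok; apply (certificate_ok_sound p tbl []); [intros _ []|exact Hok]. Qed.

Definition isomorphic_b (B1 B2 : board) : bool :=
  existsb (fun s => forallb (fun z => decb (content_eq_dec (B2 z) (B1 (s z)))) all_cells)
    symmetries.

Lemma isomorphic_b_sound B1 B2 : isomorphic_b B1 B2 = true -> isomorphic B1 B2.
Proof.
  unfold isomorphic_b; rewrite existsb_exists; intros [s [Hs H]].
  exists s; split; [exact Hs|]; intro z.
  apply (decb_spec _ (content_eq_dec _ _)), (proj1 (forallb_cells_spec _) H z).
Qed.

(* The certificate for Gray.  Constellations are written column by column
   (a b c | d e f g | h i j) with B = Black, G = Gray, . = empty. *)

Definition parse_cell (c : ascii) (rest : code) : code :=
  if Ascii.eqb c "B"%char then Blk :: rest
  else if Ascii.eqb c "G"%char then Gry :: rest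
  else if Ascii.eqb c "."%char then Emp :: rest
  else rest.

Fixpoint parse (s : string) : code :=
  match s with
  | EmptyString => []
  | String c s' => parse_cell c (parse s')
  end.

Local Open Scope string_scope.

(* The first entries are positions where Gray pushes off at once; each later
   entry gives Gray's reply, after which every Black move reaches an earlier entry. *)
Definition raw_table : list (string * option string) := [
  ("GG.|.GBB|.B.", None);
  (".GB|GG..|BB.", None);
  (".B.|GGB.|GB.", None);
  ("..B|.GGB|GB.", None);
  ("GB.|.G.B|GB.", None);
  (".B.|.GBB|GG.", None);
  ("GB.|.GB.|GB.", None);
  ("GBB|.G..|G.B", None);
  ("..B|.G.B|GGB", None);
  ("G..|GGBB|.B.", None);
  ("GB.|.GGB|..B", None);
  (".B.|.GGB|G.B", None);
  (".BB|GG..|G.B", None);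
  ("GGB|.G..|.BB", None);
  ("G.B|.GGB|.B.", None);
  (".B.|GG..|GBB", None);
  ("B.B|..GB|GG.", None);
  ("B..|.GGB|GB.", None);
  (".B.|.G.B|GGB", None);
  (".GB|.GGB|..B", None);
  ("GBB|GG..|.B.", None);
  (".G.|GG.B|B.B", None);
  (".G.|GGB.|BB.", None);
  ("G.B|.GB.|GB.", None);
  ("GB.|GGB.|.B.", None);
  (".GB|GG.B|B..", None);
  ("B..|..GB|GGB", None);
  (".GB|.GG.|.BB", None);
  ("GGB|.G.B|.B.", None);
  (".B.|GG.B|G.B", None);
  ("BB.|..G.|GGB", None);
  ("GB.|.GBB|G..", None);
  (".B.|GGBB|G..", None);
  ("GBB|.GB.|G..", None);
  ("G.B|.G..|GBB", None);
  ("GGB|.GB.|..B", None);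
  ("G..|.GBB|GB.", None);
  ("...|GBB.|GGB", None);
  ("GB.|.GB.|G.B", None);
  ("G..|GG.B|.BB", None);
  ("G.B|GG.B|.B.", None);
  ("..B|.GB.|GGB", None);
  ("...|BGGB|G.B", None);
  ("GGB|.G.B|..B", None);
  ("..B|B.G.|GGB", None);
  (".GB|.GGB|B..", None);
  (".G.|GGBB|B..", None);
  (".BB|GG.B|G..", None);
  ("..B|.BG.|GGB", None);
  (".BB|..G.|GGB", None);
  (".BB|.G..|GGB", None);
  ("G.B|GG..|.BB", None);
  (".GB|GG..|B.B", None);
  ("GGB|GBB.|...", None);
  ("G..|.GB.|GBB", None);
  (".GB|..GB|GB.", Some ".GB|.GGB|.B.");
  ("..B|GGB.|G.B", Some "..B|.GGB|G.B");
  (".GB|GGB.|.B.", Some ".GB|.GGB|.B.");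
  ("G..|.GBB|G.B", Some "...|.GBB|GGB");
  ("..B|GG.B|G.B", Some "..B|.GGB|G.B");
  ("G.B|GGB.|..B", Some "G.B|.GGB|..B");
  ("G.B|.GBB|G..", Some "GGB|.GBB|...");
  ("G.B|GG.B|..B", Some "G.B|.GGB|..B");
  ("B.B|.GG.|G.B", Some "B.B|..G.|GGB");
  ("B..|GGB.|G.B", Some "B..|.GGB|G.B");
  ("G.B|GGB.|B..", Some ".GB|GGB.|B..");
  ("G.B|.G.B|G.B", Some ".GB|..GB|G.B");
  ("GB.|G..B|G.B", Some "GB.|.G.B|G.B");
  ("G.B|G.B.|G.B", Some "G.B|.GB.|G.B");
  ("G.B|G.B.|GB.", Some "G.B|GGB.|.B.");
  ("G.B|G..B|GB.", Some "G.B|.G.B|GB.");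
  ("GB.|G.B.|G.B", Some ".B.|GGB.|G.B")].

Definition table : list (code * option code) :=
  map (fun e => (parse (fst e), option_map parse (snd e))) raw_table.

Lemma table_ok : certificate_ok Gray [] table = true.
Proof. vm_compute; reflexivity. Qed.

Lemma black_moves_from_C0 :
  forallb (fun C => isomorphic_b C C1 || mem (encode C) (map fst table)) (moves Black C0) = true.
Proof. vm_compute; reflexivity. Qed.

Theorem lemma4 : forall C : board,
  legal_move Black C0 (Cont C) -> ~ isomorphic C C1 -> forces_win Gray C.
Proof.
  intros C Hmove Hnot_C1.
  apply legal_cont_iff in Hmove.
  pose proof (proj1 (forallb_forall _ _) black_moves_from_C0 C Hmove) as Hcovered.
  apply orb_true_iff in Hcovered as [Hiso | Htabled].
  - exfalso; apply Hnot_C1, isomorphic_b_sound, Hiso.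
  - rewrite <- (decode_encode C).
    apply (certificate_sound Gray table table_ok), mem_spec, Htabled.
Qed.
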